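(* Let $G$ be a finite group, $T$ a $G$-Tambara functor, $I,J$ Tambara ideals of $T$ and $H\le G$. Then, as ideals of the ring $T(G/H)$, $\sqrt{(IJ)(G/H)}=\sqrt{I(G/H)}\cap\sqrt{J(G/H)}$, where $\sqrt{\cdot}$ denotes the ordinary radical of a ring ideal.
   Context: All rings are commutative with unit. A $G$-Tambara functor $T$ consists of commutative rings $T(G/H)$ for subgroups $H\le G$ with restriction ring maps, additive transfer maps, multiplicative norm maps and conjugation isomorphisms satisfying the standard Tambara axioms (Hill–Mazur). A Tambara ideal is a family of ring ideals $I(G/H)\subseteq T(G/H)$ closed under restriction, transfer, norm and conjugation. The product $IJ$ is the Tambara ideal generated by the levelwise products $I(G/H)\cdot J(G/H)$, $H\le G$ (i.e. the smallest Tambara ideal containing them). *)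

From HB Require Import structures.
From mathcomp Require Import all_boot all_algebra all_fingroup.

Set Implicit Arguments.
Unset Strict Implicit.
Unset Printing Implicit Defensive.

Import GRing.Theory.

(* G-Tambara functors, G a finite group.  The finite group G is the whole    *)
(* finGroupType gT, so subgroups H <= G are the groups H : {group gT}, and   *)
(* T(G/H) is written T H.                                                    *)
(* Conjugation convention (as in the paper, left):                           *)
(*   tcj g A B : T(G/A) -> T(G/gAg^-1),  meaningful when B = g A g^-1, i.e.  *)
(*   B = A :^ g^-1 in MathComp notation.  Restriction tres H K (K <= H),     *)
(*   transfer ttr K H and norm tnm K H (K <= H) are total functions, only     *)
(*   constrained by the axioms when K \subset H.                             *)

Record tambara_data (gT : finGroupType) := TambaraData {
  tval :> {group gT} -> comPzRingType;
  tres : forall (H K : {group gT}), tval H -> tval K;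
  ttr  : forall (K H : {group gT}), tval K -> tval H;
  tnm  : forall (K H : {group gT}), tval K -> tval H;
  tcj  : gT -> forall (A B : {group gT}), tval A -> tval B
}.

Arguments tres {gT} t H K.
Arguments ttr {gT} t K H.
Arguments tnm {gT} t K H.
Arguments tcj {gT} t g A B.

Section TambaraAxioms.
Variable gT : finGroupType.
Variable T : tambara_data gT.

Local Notation res := (tres T).
Local Notation tr := (ttr T).
Local Notation nm := (tnm T).
Local Notation cj := (tcj T).

Local Open Scope ring_scope.

Definition dcosets (L H K : {set gT}) : {set {set gT}} :=
  [set ((L :* g) * K)%g | g in H].

Definition mackey_term (K L : {group gT}) (x : T K) (g : gT) : T L :=
  tr (L :&: K :^ g^-1)%G L
     (cj g (L :^ g :&: K)%G (L :&: K :^ g^-1)%G (res K (L :^ g :&: K)%G x)).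

Definition mult_mackey_term (K L : {group gT}) (x : T K) (g : gT) : T L :=
  nm (L :&: K :^ g^-1)%G L
     (cj g (L :^ g :&: K)%G (L :&: K :^ g^-1)%G (res K (L :^ g :&: K)%G x)).

(* For K <= H and a finite family of subgroups Lf i <= K with a i in T(Lf i), *)
(* N_K^H (sum_i tr_{Lf i}^K a i) is computed by the exponential diagram:     *)
(* X = coprod_i H/(Lf i) -> H/K, sections s of X -> H/K (encoded as finite   *)
(* functions on left cosets of K in H, sending C to Some (i, C') with C' a   *)
(* left coset of Lf i contained in C; None outside H/K), with the H-action  *)
(* (h.s)(C) = h s(h^-1 C).                                                    *)

Section Reciprocity.
Variables (I : finType) (Lf : I -> {group gT}) (K H : {group gT}).

Definition section_type := {ffun {set gT} -> option (I * {set gT})}.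

Definition sections : {set section_type} :=
  [set s : section_type | [forall C : {set gT},
     if C \in lcosets K H then
       (if s C is Some p then (p.2 \in lcosets (Lf p.1) H) && (p.2 \subset C)
        else false)
     else s C == None]].

Definition sact (s : section_type) (h : gT) : section_type :=
  [ffun C => omap (fun p : I * {set gT} => (p.1, (h *: p.2)%g)) (s ((h^-1) *: C)%g)].

Definition section_orbits : {set {set section_type}} :=
  [set [set sact s h | h in H] | s in sections].

Definition sstab (s : section_type) : {group gT} :=
  <<[set h in H | sact s h == s]>>%G.

Definition cos_orbits (M : {group gT}) : {set {set {set gT}}} :=
  [set [set (m *: C)%g | m in M] | C in lcosets K H].

Variable a : forall i, T (Lf i).

Definition recip_factor (s : section_type) (C : {set gT}) : T (sstab s) :=
  let M := sstab s in
  match s C with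
  | Some p =>
      let i := p.1 in let h' := repr p.2 in
      nm (M :&: Lf i :^ h'^-1)%G M
         (cj h' (M :^ h' :&: Lf i)%G (M :&: Lf i :^ h'^-1)%G
             (res (Lf i) (M :^ h' :&: Lf i)%G (a i)))
  | None => 1
  end.

Definition recip_term (O : {set section_type}) : T H :=
  match [pick s in O] with
  | Some s =>
      tr (sstab s) H
        (\prod_(Orb in cos_orbits (sstab s))
            match [pick C in Orb] with Some C => recip_factor s C | None => 1 end)
  | None => 0
  end.

Definition recip_rhs : T H := \sum_(O in section_orbits) recip_term O.

End Reciprocity.

Record is_tambara : Prop := IsTambara {
  res_add : forall (H K : {group gT}) x y, K \subset H ->
    res H K (x + y) = res H K x + res H K y;
  res_mul : forall (H K : {group gT}) x y, K \subset H ->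
    res H K (x * y) = res H K x * res H K y;
  res_one : forall (H K : {group gT}), K \subset H -> res H K 1 = 1;
  res_id : forall (H : {group gT}) x, res H H x = x;
  res_comp : forall (H K L : {group gT}) x, L \subset K -> K \subset H ->
    res K L (res H K x) = res H L x;
  tr_add : forall (K H : {group gT}) x y, K \subset H ->
    tr K H (x + y) = tr K H x + tr K H y;
  tr_id : forall (H : {group gT}) x, tr H H x = x;
  tr_comp : forall (L K H : {group gT}) x, L \subset K -> K \subset H ->
    tr K H (tr L K x) = tr L H x;
  nm_mul : forall (K H : {group gT}) x y, K \subset H ->
    nm K H (x * y) = nm K H x * nm K H y;
  nm_one : forall (K H : {group gT}), K \subset H -> nm K H 1 = 1;
  nm_id : forall (H : {group gT}) x, nm H H x = x;
  nm_comp : forall (L K H : {group gT}) x, L \subset K -> K \subset H ->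
    nm K H (nm L K x) = nm L H x;
  cj_add : forall g (A B : {group gT}) x y, (B :=: A :^ g^-1)%g ->
    cj g A B (x + y) = cj g A B x + cj g A B y;
  cj_mul : forall g (A B : {group gT}) x y, (B :=: A :^ g^-1)%g ->
    cj g A B (x * y) = cj g A B x * cj g A B y;
  cj_one : forall g (A B : {group gT}), (B :=: A :^ g^-1)%g -> cj g A B 1 = 1;
  cj_unit : forall (A : {group gT}) x, cj 1%g A A x = x;
  cj_comp : forall g h (A B C : {group gT}) x,
    (B :=: A :^ g^-1)%g -> (C :=: B :^ h^-1)%g ->
    cj h B C (cj g A B x) = cj (h * g)%g A C x;
  cj_inner : forall h (A : {group gT}) x, h \in A -> cj h A A x = x;
  cj_res : forall g (H K H' K' : {group gT}) x, K \subset H ->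
    (H' :=: H :^ g^-1)%g -> (K' :=: K :^ g^-1)%g ->
    cj g K K' (res H K x) = res H' K' (cj g H H' x);
  cj_tr : forall g (H K H' K' : {group gT}) x, K \subset H ->
    (H' :=: H :^ g^-1)%g -> (K' :=: K :^ g^-1)%g ->
    cj g H H' (tr K H x) = tr K' H' (cj g K K' x);
  cj_nm : forall g (H K H' K' : {group gT}) x, K \subset H ->
    (H' :=: H :^ g^-1)%g -> (K' :=: K :^ g^-1)%g ->
    cj g H H' (nm K H x) = nm K' H' (cj g K K' x);
  frobenius : forall (K H : {group gT}) x y, K \subset H ->
    tr K H (x * res H K y) = tr K H x * y;
  mackey : forall (H K L : {group gT}) (x : T K), K \subset H -> L \subset H ->
    res H L (tr K H x) =
    \sum_(D in dcosets L H K) @mackey_term K L x (repr D);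
  mult_mackey : forall (H K L : {group gT}) (x : T K), K \subset H -> L \subset H ->
    res H L (nm K H x) =
    \prod_(D in dcosets L H K) @mult_mackey_term K L x (repr D);
  tambara_recip : forall (I : finType) (Lf : I -> {group gT}) (K H : {group gT})
    (a : forall i, T (Lf i)),
    K \subset H -> (forall i, Lf i \subset K) ->
    nm K H (\sum_(i : I) tr (Lf i) K (a i)) = @recip_rhs I Lf K H a
}.

Definition is_ring_ideal (R : comPzRingType) (P : R -> Prop) : Prop :=
  [/\ P 0, (forall x y, P x -> P y -> P (x + y)) & (forall r x, P x -> P (r * x))].

Definition radical (R : comPzRingType) (P : R -> Prop) : R -> Prop :=
  fun x => exists n : nat, P (x ^+ n).

Definition ideal_prod (R : comPzRingType) (P Q : R -> Prop) : R -> Prop :=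
  fun z => exists (n : nat) (xs ys : 'I_n -> R),
    [/\ forall k, P (xs k), forall k, Q (ys k) & z = \sum_(k < n) xs k * ys k].

Definition is_tambara_ideal (I : forall H : {group gT}, T H -> Prop) : Prop :=
  [/\ forall H, is_ring_ideal (I H),
      forall (H K : {group gT}) x, K \subset H -> I H x -> I K (res H K x),
      forall (K H : {group gT}) x, K \subset H -> I K x -> I H (tr K H x),
      forall (K H : {group gT}) x, K \subset H -> I K x -> I H (nm K H x)
    & forall g (A B : {group gT}) x, (B :=: A :^ g^-1)%g -> I A x -> I B (cj g A B x)].

(* product of Tambara ideals: the smallest Tambara ideal containing the     *)
(* levelwise products I(G/H) J(G/H)                                          *)
Definition tambara_ideal_prod (I J : forall H : {group gT}, T H -> Prop) :
    forall H : {group gT}, T H -> Prop :=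
  fun H x => forall P : forall H : {group gT}, T H -> Prop,
    is_tambara_ideal P ->
    (forall (H' : {group gT}) y, ideal_prod (I H') (J H') y -> P H' y) ->
    P H x.

End TambaraAxioms.

Arguments is_tambara {gT} T.
Arguments is_tambara_ideal {gT T} I.
Arguments tambara_ideal_prod {gT T} I J H x.
Arguments radical {R} P x.
Arguments ideal_prod {R} P Q z.

(* IJ lies in I and in J, because each of them is a Tambara ideal containing
   the levelwise products; hence the radical of (IJ)(G/H) lies in both radicals.
   Conversely, if x^n is in I(G/H) and x^m in J(G/H), then x^(n+m) = x^n x^m is
   in the levelwise product, hence in (IJ)(G/H).  Neither direction uses the
   Tambara axioms of T. *)

From HB Require Import structures.
From mathcomp Require Import all_boot all_algebra all_fingroup.

Set Implicit Arguments.
Unset Strict Implicit.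
Unset Printing Implicit Defensive.

Import GRing.Theory.
Local Open Scope ring_scope.

Section RingIdeals.
Variable R : comPzRingType.
Implicit Types P Q S : R -> Prop.

Lemma ideal_prod_min P Q S :
  is_ring_ideal S -> (forall a b, P a -> Q b -> S (a * b)) ->
  forall z, ideal_prod P Q z -> S z.
Proof.
move=> [S0 SD _] SPQ z [n [xs [ys [Pxs Qys ->]]]].
by apply: (big_ind S) => // k _; apply: SPQ.
Qed.

Lemma ideal_prod_subl P Q z : is_ring_ideal P -> ideal_prod P Q z -> P z.
Proof.
move=> idP; apply: ideal_prod_min => // a b Pa _.
by case: idP => _ _ PM; rewrite mulrC; apply: PM.
Qed.

Lemma ideal_prod_subr P Q z : is_ring_ideal Q -> ideal_prod P Q z -> Q z.
Proof.
move=> idQ; apply: ideal_prod_min => // a b _ Qb.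
by case: idQ => _ _ QM; apply: QM.
Qed.

Lemma ideal_prod_mul P Q a b : P a -> Q b -> ideal_prod P Q (a * b).
Proof.
move=> Pa Qb; exists 1%N, (fun=> a), (fun=> b).
by split=> //; rewrite big_ord1.
Qed.

Lemma radical_sub P Q x : (forall y, P y -> Q y) -> radical P x -> radical Q x.
Proof. by move=> PQ [n Pxn]; exists n; apply: PQ. Qed.

Lemma radical_ideal_prod P Q x :
  radical P x -> radical Q x -> radical (ideal_prod P Q) x.
Proof.
by move=> [n Pxn] [m Qxm]; exists (n + m)%N; rewrite exprD; apply: ideal_prod_mul.
Qed.

End RingIdeals.

Section TambaraIdealProduct.
Variables (gT : finGroupType) (T : tambara_data gT).
Implicit Types I J : forall H : {group gT}, T H -> Prop.

Lemma tambara_ideal_prod_subl I J H x :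
  is_tambara_ideal I -> tambara_ideal_prod I J H x -> I H x.
Proof.
move=> tI; apply => // H' y; apply: ideal_prod_subl.
by case: tI.
Qed.

Lemma tambara_ideal_prod_subr I J H x :
  is_tambara_ideal J -> tambara_ideal_prod I J H x -> J H x.
Proof.
move=> tJ; apply => // H' y; apply: ideal_prod_subr.
by case: tJ.
Qed.

Lemma ideal_prod_sub_tambara I J H x :
  ideal_prod (I H) (J H) x -> tambara_ideal_prod I J H x.
Proof. by move=> IJx P _; apply. Qed.

End TambaraIdealProduct.

Theorem lemma4p28 (gT : finGroupType) (T : tambara_data gT)
  (I J : forall H : {group gT}, T H -> Prop) (H : {group gT}) :
  is_tambara T -> is_tambara_ideal I -> is_tambara_ideal J ->
  forall x : T H,
    radical (tambara_ideal_prod I J H) x <->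
    radical (I H) x /\ radical (J H) x.
Proof.
move=> _ tI tJ x; split.
- move=> rIJx; split; apply: radical_sub rIJx => y.
  + exact: tambara_ideal_prod_subl.
  + exact: tambara_ideal_prod_subr.
- case=> rIx rJx; apply: radical_sub (radical_ideal_prod rIx rJx) => y.
  exact: ideal_prod_sub_tambara.
Qed.
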